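(* Let $\alpha$ be an $H$-coloring of $G$ and let $C$ be an $\alpha$-tight closed walk in $G$. Then every vertex of $C$ is frozen in $\alpha$.
   Context: All graphs are finite and undirected. $G$ is a connected loopless graph with at least one edge. $H$ is a connected graph with at least one edge, possibly with loops, having the monochromatic neighborhood property: for all $a,b\in V(H)$, $|N_H(a)\cap N_H(b)|\le 1$, where $N_H(a)=\{w: aw\in E(H)\}$. An $H$-coloring of $G$ is a map $\sigma:V(G)\to V(H)$ such that $uv\in E(G)$ implies $\sigma(u)\sigma(v)\in E(H)$. An $H$-recoloring sequence is a sequence $\sigma_0,\dots,\sigma_l$ of $H$-colorings of $G$ in which consecutive colorings differ in the color of exactly one vertex. An oriented edge is an ordered pair $(x,y)$ with $xy$ an edge; $(x,y)^{-1}=(y,x)$. A walk is a sequence of oriented edges in which each starts where the previous ends; it is closed if it ends where it starts. A walk is reduced if no two consecutive edges $e_ie_{i+1}$ satisfy $e_{i+1}=e_i^{-1}$. A nonempty closed walk $e_1\dots e_k$ is cyclically reduced if it is reduced and $e_k\neq e_1^{-1}$. For a walk $W=(x_0,x_1)\dots(x_{k-1},x_k)$ in $G$, $\alpha(W)=(\alpha(x_0),\alpha(x_1))\dots(\alpha(x_{k-1}),\alpha(x_k))$. A closed walk $C$ in $G$ is $\alpha$-tight if $\alpha(C)$ is cyclically reduced. A vertex $v$ is frozen in $\alpha$ if every $H$-recoloring sequence starting at $\alpha$ ends in a coloring $\beta$ with $\beta(v)=\alpha(v)$. *)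

From mathcomp Require Import all_boot.
Set Implicit Arguments.
Unset Strict Implicit.
Unset Printing Implicit Defensive.

(* A finite undirected graph: vertex finType T with a symmetric relation e. *)
Definition symmetric_rel (T : finType) (e : rel T) := forall x y, e x y = e y x.
Definition loopless (T : finType) (e : rel T) := forall x, ~~ e x x.
Definition connected_graph (T : finType) (e : rel T) := forall x y, connect e x y.
Definition has_edge (T : finType) (e : rel T) := exists x y, e x y.

Definition nbhd (T : finType) (e : rel T) (a : T) : {set T} := [set w | e a w].

Definition mono_nbhd_property (T : finType) (e : rel T) :=
  forall a b, a != b -> #|nbhd e a :&: nbhd e b| <= 1.

Definition is_Hcoloring (V W : finType) (eG : rel V) (eH : rel W) (s : V -> W) :=
  forall u v, eG u v -> eH (s u) (s v).

Definition differ_in_one (V W : finType) (s t : V -> W) :=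
  exists v, s v <> t v /\ forall u, u <> v -> s u = t u.

(* recoloring_seq s l : s :: l is an H-recoloring sequence (starting at s) *)
Fixpoint recoloring_seq (V W : finType) (eG : rel V) (eH : rel W)
  (s : V -> W) (l : seq (V -> W)) : Prop :=
  match l with
  | [::] => is_Hcoloring eG eH s
  | t :: l' => is_Hcoloring eG eH s /\ differ_in_one s t /\ recoloring_seq eG eH t l'
  end.

Definition frozen (V W : finType) (eG : rel V) (eH : rel W) (alpha : V -> W) (v : V) :=
  forall l, recoloring_seq eG eH alpha l -> (last alpha l) v = alpha v.

(* oriented edges are pairs (x, y) with e x y; inverse swaps them *)
Definition oinv (T : Type) (p : T * T) : T * T := (p.2, p.1).

Definition is_walk (T : finType) (e : rel T) (s : seq (T * T)) : bool :=
  all (fun p => e p.1 p.2) s && sorted (fun p q => p.2 == q.1) s.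

Definition is_closed_walk (T : finType) (e : rel T) (s : seq (T * T)) : bool :=
  match s with
  | [::] => false
  | p :: _ => is_walk e s && ((last p s).2 == p.1)
  end.

Definition reduced (T : finType) (s : seq (T * T)) : bool :=
  sorted (fun p q => q != oinv p) s.

Definition cyclically_reduced (T : finType) (s : seq (T * T)) : bool :=
  match s with
  | [::] => false
  | p :: _ => [&& (last p s).2 == p.1, reduced s & last p s != oinv p]
  end.

Definition map_walk (V W : finType) (alpha : V -> W) (s : seq (V * V)) : seq (W * W) :=
  map (fun p => (alpha p.1, alpha p.2)) s.

Definition tight (V W : finType) (eG : rel V) (alpha : V -> W) (C : seq (V * V)) :=
  is_closed_walk eG C && cyclically_reduced (map_walk alpha C).

Definition vertex_of_walk (T : finType) (x : T) (s : seq (T * T)) : bool :=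
  has (fun p => (p.1 == x) || (p.2 == x)) s.

From mathcomp Require Import all_boot.
Set Implicit Arguments.
Unset Strict Implicit.
Unset Printing Implicit Defensive.

(* A vertex v with two neighbours coloured a != b can never be recoloured on
   its own: its old and new colours would both be common H-neighbours of a and
   b, and the monochromatic neighbourhood property allows only one. On an
   alpha-tight closed walk the predecessor and successor of each vertex have
   distinct colours, since otherwise the image walk would backtrack there. As
   no vertex of the walk can move first, none ever moves. *)

Section Recoloring.

Variables (V W : finType) (eG : rel V) (eH : rel W).
Hypotheses (G_loopless : loopless eG) (H_sym : symmetric_rel eH)
  (H_mono : mono_nbhd_property eH).

Lemma loopless_neq u v : eG u v -> u <> v.
Proof. by move=> euv uv; move: (G_loopless v); rewrite -{1}uv euv. Qed.

Lemma common_nbhd_eq (a b x y : W) :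
  a != b -> eH a y -> eH y b -> eH a x -> eH x b -> x = y.
Proof.
move=> ab ay yb ax xb.
have sub : [set x; y] \subset nbhd eH a :&: nbhd eH b.
  by apply/subsetP=> z; rewrite !inE => /orP[]/eqP->; rewrite [eH b _]H_sym ?ax ?xb ?ay ?yb.
have := leq_trans (subset_leq_card sub) (H_mono ab).
by rewrite cards2; case: eqP.
Qed.

Lemma recoloring_step_fixed (s t : V -> W) u v w :
  is_Hcoloring eG eH s -> is_Hcoloring eG eH t -> differ_in_one s t ->
  eG u v -> eG v w -> s u != s w -> t v = s v.
Proof.
move=> hs ht [d [_ st_off]] euv evw suw.
case: (v =P d) => [vd|/st_off //]; subst d.
have su : s u = t u := st_off _ (loopless_neq euv).
have sw : s w = t w := st_off _ (fun wv => loopless_neq evw (esym wv)).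
apply: (common_nbhd_eq suw (hs _ _ euv) (hs _ _ evw)); rewrite ?su ?sw.
- exact: ht euv.
- exact: ht evw.
Qed.

Definition rigid (s : V -> W) (X : pred V) :=
  forall v, X v -> exists u w, [/\ X u, X w, eG u v, eG v w & s u != s w].

Lemma recoloring_seq_Hcoloring s l :
  recoloring_seq eG eH s l -> is_Hcoloring eG eH s.
Proof. by case: l => [|t l] //= []. Qed.

Lemma eq_rigid (s t : V -> W) (X : pred V) :
  (forall v, X v -> t v = s v) -> rigid s X -> rigid t X.
Proof.
move=> ts rs v Xv; have [u [w [Xu Xw euv evw suw]]] := rs v Xv.
by exists u, w; rewrite ts ?ts.
Qed.

Lemma rigid_recoloring_fixed (s : V -> W) (X : pred V) l :
  rigid s X -> recoloring_seq eG eH s l -> forall v, X v -> last s l v = s v.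
Proof.
elim: l s => [//|t l IHl] s rs /= [hs [st hl]].
have ts v : X v -> t v = s v.
  move=> Xv; have [u [w [_ _ euv evw suw]]] := rs v Xv.
  exact: recoloring_step_fixed hs (recoloring_seq_Hcoloring hl) st euv evw suw.
by move=> v Xv; rewrite IHl ?ts //; exact: eq_rigid ts rs.
Qed.

End Recoloring.

Section TightWalks.

Variables (V W : finType) (eG : rel V) (alpha : V -> W).

Definition nonbacktracking_turn : rel (V * V) :=
  fun p q => (p.2 == q.1) && (alpha q.2 != alpha p.1).

Lemma nonbacktracking_turnE (p q : V * V) : p.2 = q.1 ->
  nonbacktracking_turn p q = ((alpha q.1, alpha q.2) != oinv (alpha p.1, alpha p.2)).
Proof. by move=> pq; rewrite /nonbacktracking_turn /oinv /= pq eqxx xpair_eqE eqxx. Qed.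

Lemma tight_cycle C : tight eG alpha C -> cycle nonbacktracking_turn C.
Proof.
case: C => [//|c0 cs].
rewrite /tight /is_closed_walk /cyclically_reduced /map_walk /reduced /is_walk /=.
rewrite last_map path_map rcons_path.
case/andP=> /andP[/andP[_ walk_cs] /eqP closed] /and3P[_ reduced_cs last_turn].
apply/andP; split.
  have: path [rel p q | (p.2 == q.1) &&
                ((alpha q.1, alpha q.2) != oinv (alpha p.1, alpha p.2))] c0 cs.
    by rewrite path_relI walk_cs.
  by apply: sub_path => p q /andP[/eqP pq]; rewrite nonbacktracking_turnE.
move: last_turn; rewrite /nonbacktracking_turn /oinv /= closed eqxx xpair_eqE.
by rewrite eqxx andbT eq_sym.
Qed.

Lemma closed_walk_edge (e : rel V) C p : is_closed_walk e C -> p \in C -> e p.1 p.2.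
Proof. by case: C => [//|c0 cs] /andP[/andP[/allP edges _] _]; exact: edges. Qed.

Lemma tight_rigid C : tight eG alpha C -> rigid eG alpha (fun v => vertex_of_walk v C).
Proof.
move=> hC; have cycC := tight_cycle hC; case/andP: hC => walkC _.
have onC x p : p \in C -> (p.1 == x) || (p.2 == x) -> vertex_of_walk x C.
  by move=> pC px; apply/hasP; exists p.
have turn_rigid p q : p \in C -> q \in C -> nonbacktracking_turn p q ->
    exists u w, [/\ vertex_of_walk u C, vertex_of_walk w C,
                    eG u p.2, eG p.2 w & alpha u != alpha w].
  move=> pC qC /andP[/eqP pq qp]; exists p.1, q.2; split.
  - by apply: (onC _ p); rewrite ?eqxx.
  - by apply: (onC _ q); rewrite ?eqxx ?orbT.
  - exact: closed_walk_edge walkC pC.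
  - by rewrite pq; exact: closed_walk_edge walkC qC.
  - by rewrite eq_sym.
move=> v /hasP[p pC /orP[]/eqP<-].
- have [/eqP <- _] := andP (prev_cycle cycC pC).
  by apply: turn_rigid (prev_cycle cycC pC); rewrite ?mem_prev.
- by apply: turn_rigid (next_cycle cycC pC); rewrite ?mem_next.
Qed.

End TightWalks.

Theorem mainTheorem4 (V W : finType) (eG : rel V) (eH : rel W)
  (G_sym : symmetric_rel eG) (G_loopless : loopless eG)
  (G_conn : connected_graph eG) (G_edge : has_edge eG)
  (H_sym : symmetric_rel eH) (H_conn : connected_graph eH) (H_edge : has_edge eH)
  (H_mono : mono_nbhd_property eH)
  (alpha : V -> W) (halpha : is_Hcoloring eG eH alpha)
  (C : seq (V * V)) (hC : tight eG alpha C) :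
  forall v : V, vertex_of_walk v C -> frozen eG eH alpha v.
Proof.
move=> v vC l hl.
exact: (rigid_recoloring_fixed G_loopless H_sym H_mono (tight_rigid hC) hl vC).
Qed.
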